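(* Let $X$ be a normed space and $X_1\subset X_2\subset\cdots$ an increasing sequence of finite dimensional subspaces with $\bigcup_n X_n$ dense in $X$. Let $\rho$ be an accumulation point of the sequence $(r(S_{X_n}))_n$. Then $\rho\in\mathcal{R}(X)$.
   Context: For a normed space $Z$ with unit sphere $S_Z$ and kernel $\|x-y\|$, $R(S_Z):=\bigcap_{m\in\mathbb{N}}\bigcap_{w_1,\dots,w_m\in S_Z}\overline{\mathrm{conv}}\{\frac1m\sum_{j=1}^m\|x-w_j\|:x\in S_Z\}$ and $\mathcal{R}(X):=R(S_X)$. For finite dimensional $X_n$ (with the norm of $X$ restricted), $S_{X_n}$ is compact and $R(S_{X_n})$ consists of exactly one number (a known fact), denoted $r(S_{X_n})$. *)

From HB Require Import structures.
From mathcomp Require Import all_boot all_order all_algebra.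
From mathcomp Require Import all_classical all_reals all_analysis.
Set Implicit Arguments. Unset Strict Implicit. Unset Printing Implicit Defensive.
Import Order.TTheory GRing.Theory Num.Theory.
Import numFieldNormedType.Exports.
Local Open Scope classical_set_scope.
Local Open Scope ring_scope.

Section Defs.
Context {R : realType} {V : normedModType R}.

(** The subspace spanned by a finite family of vectors (a finite dimensional
    subspace is exactly a set of this form). *)
Definition fin_span (k : nat) (v : 'I_k -> V) : set V :=
  [set x | exists c : 'I_k -> R, x = \sum_(i < k) c i *: v i].

Definition fin_dim_subspace (Z : set V) : Prop :=
  exists k (v : 'I_k -> V), Z = fin_span v.

Definition unit_sphere (Z : set V) : set V := [set x | Z x /\ `|x| = 1].

Definition convexR (C : set R) : Prop :=
  forall a b t, C a -> C b -> 0 <= t <= 1 -> C (t * a + (1 - t) * b).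

Definition clconv (A : set R) : set R :=
  \bigcap_(C in [set C : set R | closed C /\ convexR C /\ A `<=` C]) C.

(** R(S) for the kernel ||x - y|| ; m ranges over positive integers (m = k.+1) *)
Definition Rset (S : set V) : set R :=
  [set rho | forall (k : nat) (w : 'I_k.+1 -> V), (forall j, S (w j)) ->
     clconv [set ((k.+1)%:R)^-1 * \sum_(j < k.+1) `|x - w j| | x in S] rho].

End Defs.

(** Membership in [R(S_X)] asks, for each family [w_1, ..., w_m] in [S_X],
    to lie in the closed convex hull of the averaged distances
    [x |-> (1/m) sum_j ||x - w_j||] on [S_X], i.e. in a closed interval.
    Approximate each [w_j] by a unit vector [w'_j] of some [X_N]; the
    averages taken against [w'] differ by at most [e] from those taken
    against [w], and for [n >= N] the sphere [S_{X_n}] is part of [S_X].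
    So [r(S_{X_n})], which lies in the interval built from [w'] on
    [S_{X_n}], is within [e] of the interval built from [w] on [S_X];
    letting [n] run along a subsequence with [r(S_{X_n}) -> rho] puts
    [rho] in it. *)
From HB Require Import structures.
From mathcomp Require Import all_boot all_order all_algebra.
From mathcomp Require Import all_classical all_reals all_analysis.
From mathcomp Require Import ring lra.
Import Order.TTheory GRing.Theory Num.Theory.
Import numFieldNormedType.Exports.
Local Open Scope classical_set_scope.
Local Open Scope ring_scope.

Section ClosedConvexHullR.
Context {R : realType}.
Implicit Types (A B C : set R) (a b e t x y : R).

Lemma closed_approx C x : closed C ->
  (forall e, 0 < e -> exists2 c, C c & `|x - c| < e) -> C x.
Proof.
move=> cC Capprox; apply: cC => U /nbhs_ballP [e /= e0 eU].
have [c Cc xc] := Capprox e e0.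
by exists c; split => //; apply: eU; rewrite -ball_normE.
Qed.

Lemma convexR_ge t : convexR [set z | t <= z].
Proof. by move=> a b s /= le_a le_b /andP[s0 s1]; nra. Qed.

Lemma convexR_le t : convexR [set z | z <= t].
Proof. by move=> a b s /= a_le b_le /andP[s0 s1]; nra. Qed.

Lemma convexR_between {C a b x} : convexR C -> C a -> C b -> a <= x <= b -> C x.
Proof.
move=> convC Ca Cb /andP[ax xb].
have [ab|ba] := ltP a b; last by rewrite (@le_anti _ _ x a) ?ax ?(le_trans xb).
have {}ab : 0 < b - a by rewrite subr_gt0.
have -> : x = (b - x) / (b - a) * a + (1 - (b - x) / (b - a)) * b.
  by field; rewrite gt_eqF.
apply: convC => //; rewrite divr_ge0 ?(ltW ab) ?subr_ge0 //=.
by rewrite ler_pdivrMr // mul1r; lra.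
Qed.

Lemma clconv_sub {A C} : closed C -> convexR C -> A `<=` C -> clconv A `<=` C.
Proof. by move=> cC convC AC y; apply. Qed.

Lemma clconv_exists_lt {A y e} : clconv A y -> 0 < e -> exists2 a, A a & a < y + e.
Proof.
move=> Ay e0; have [//|no_a] := pselect (exists2 a, A a & a < y + e).
have bound : A `<=` [set z | y + e <= z].
  by move=> a Aa /=; rewrite leNgt; apply/negP => ?; apply: no_a; exists a.
have /= := clconv_sub (@closed_ge _ _) (convexR_ge _) bound _ Ay; lra.
Qed.

Lemma clconv_exists_gt {A y e} : clconv A y -> 0 < e -> exists2 a, A a & y - e < a.
Proof.
move=> Ay e0; have [//|no_a] := pselect (exists2 a, A a & y - e < a).
have bound : A `<=` [set z | z <= y - e].
  by move=> a Aa /=; rewrite leNgt; apply/negP => ?; apply: no_a; exists a.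
have /= := clconv_sub (@closed_le _ _) (convexR_le _) bound _ Ay; lra.
Qed.

Lemma clconv_of_bounds A y :
  (forall e, 0 < e -> exists2 a, A a & a < y + e) ->
  (forall e, 0 < e -> exists2 b, A b & y - e < b) -> clconv A y.
Proof.
move=> below above C [cC [convC AC]]; apply: closed_approx => // e e0.
have [a Aa ay] := below e e0; have [b Ab yb] := above e e0.
have [ya|ay'] := ltP y a; first by exists a; [exact: AC|rewrite ltr_distlC; lra].
have [by'|yb'] := ltP b y; first by exists b; [exact: AC|rewrite ltr_distlC; lra].
exists y; last by rewrite subrr normr0.
by apply: (convexR_between convC (AC _ Aa) (AC _ Ab)); rewrite ay' yb'.
Qed.

Lemma clconv_approx A y :
  (forall e, 0 < e -> exists B z, [/\ clconv B z, `|z - y| < e &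
     forall b, B b -> exists2 a, A a & `|a - b| <= e]) -> clconv A y.
Proof.
move=> approx; apply: clconv_of_bounds => e e0;
  have e3 : 0 < e / 3 := divr_gt0 e0 (ltr0Sn _ 2);
  have [B [z [Bz zy BA]]] := approx _ e3.
- have [b Bb bz] := clconv_exists_lt Bz e3; have [a Aa ab] := BA b Bb.
  exists a => //; move: zy ab.
  by rewrite ltr_distl ler_distl => /andP[? ?] /andP[? ?]; lra.
- have [b Bb bz] := clconv_exists_gt Bz e3; have [a Aa ab] := BA b Bb.
  exists a => //; move: zy ab.
  by rewrite ltr_distl ler_distl => /andP[? ?] /andP[? ?]; lra.
Qed.

End ClosedConvexHullR.

Section UnitSphereApprox.
Context {R : realType} {V : normedModType R}.
Implicit Types (Z : set V) (w x z : V).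

Lemma fin_dim_subspaceZ Z a z : fin_dim_subspace Z -> Z z -> Z (a *: z).
Proof.
move=> [k [v ->]] [c ->]; exists (fun i => a * c i).
by rewrite scaler_sumr; apply: eq_bigr => i _; rewrite scalerA.
Qed.

Lemma dist_normalize w z : `|w| = 1 -> `|w - `|z|^-1 *: z| <= 2 * `|w - z|.
Proof.
move=> w1; have [->|z0] := eqVneq z 0.
  by rewrite normr0 invr0 scale0r !subr0 w1; lra.
have z_normalize : `|z - `|z|^-1 *: z| = `| `|z| - 1 |.
  rewrite -{1}(scale1r z) -scalerBl normrZ -[X in _ * X]normr_id -normrM.
  by rewrite mulrBl mul1r mulVf ?normr_eq0.
apply: le_trans (ler_distD z _ _) _; rewrite z_normalize.
by have := ler_dist_dist z w; rewrite w1 (distrC z w); lra.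
Qed.

Lemma unit_sphere_approx {X : nat -> set V} {w d} :
  (forall n, fin_dim_subspace (X n)) -> closure (\bigcup_n X n) = setT ->
  `|w| = 1 -> 0 < d -> exists n y, unit_sphere (X n) y /\ `|w - y| <= d.
Proof.
move=> Xsub Xdense w1 d0; pose d' := Num.min (d / 2) 1.
have d'0 : 0 < d' by rewrite /d' lt_min ltr01 andbT divr_gt0.
have : closure (\bigcup_n X n) w by rewrite Xdense.
move=> /(_ (ball w d')) [|z [[n _ Xz] wz]]; first by apply/nbhs_ballP; exists d'.
move: wz; rewrite -ball_normE /= lt_min => /andP[wzd wz1].
have z0 : 0 < `|z|.
  by have := ler_dist_dist w z; rewrite w1 ler_distl => /andP[? ?]; lra.
exists n, (`|z|^-1 *: z); split; first split; first exact: fin_dim_subspaceZ.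
  by rewrite normrZ normfV normr_id mulVf ?gt_eqF.
by apply: le_trans (dist_normalize w z w1) _; lra.
Qed.

Lemma unit_sphere_approx_family {X : nat -> set V} {I : finType} {w : I -> V} {d} :
  (forall n, fin_dim_subspace (X n)) -> (forall n, X n `<=` X n.+1) ->
  closure (\bigcup_n X n) = setT -> (forall j, `|w j| = 1) -> 0 < d ->
  exists N (w' : I -> V), (forall j, `|w j - w' j| <= d) /\
    forall n, (N <= n)%N -> forall j, unit_sphere (X n) (w' j).
Proof.
move=> Xsub Xsucc Xdense w1 d0.
have /choice [p hp] : forall j, exists p : nat * V,
    unit_sphere (X p.1) p.2 /\ `|w j - p.2| <= d.
  move=> j; have [n [y ?]] := unit_sphere_approx Xsub Xdense (w1 j) d0.
  by exists (n, y).
have Xmono : nondecreasing_seq X.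
  by apply/nondecreasing_seqP => n; apply/subsetPset.
exists (\max_j (p j).1)%N, (fun j => (p j).2).
split=> [j|n Nn j]; first by case: (hp j).
have [[Xp p1] _] := hp j; split => //.
apply/subsetPset: Xp; apply: Xmono; apply: leq_trans Nn.
exact: (leq_bigmax (F := fun j => (p j).1)).
Qed.

Lemma mean_dist_perturb k (w w' : 'I_k.+1 -> V) x d :
  (forall j, `|w j - w' j| <= d) ->
  `|(k.+1)%:R^-1 * \sum_(j < k.+1) `|x - w j|
    - (k.+1)%:R^-1 * \sum_(j < k.+1) `|x - w' j| | <= d.
Proof.
move=> ww'; have m0 : 0 < (k.+1)%:R :> R by rewrite ltr0n.
rewrite -mulrBr -sumrB normrM gtr0_norm ?invr_gt0 // ler_pdivrMl //.
apply: le_trans (ler_norm_sum _ _ _) _.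
rewrite mulr_natl -[X in d *+ X](card_ord k.+1) -sumr_const.
apply: ler_sum => j _.
apply: le_trans (ler_dist_dist _ _) _.
by rewrite opprB addrC addrA subrK distrC.
Qed.

End UnitSphereApprox.

Theorem corollary4p6 (R : realType) (V : normedModType R)
  (X : nat -> set V) (r : nat -> R) (rho : R) :
  (forall n, fin_dim_subspace (X n)) ->
  (forall n, X n `<=` X n.+1) ->
  closure (\bigcup_n X n) = setT ->
  (* r n = r(S_{X_n}), the unique element of R(S_{X_n}) (when X_n <> {0}) *)
  (forall n, (exists x, X n x /\ x != 0) -> Rset (unit_sphere (X n)) = [set r n]) ->
  (* rho is an accumulation point of (r n)_n *)
  (forall e : R, 0 < e -> forall N : nat, exists2 n : nat, (N <= n)%N & `|r n - rho| < e) ->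
  Rset (unit_sphere (@setT V)) rho.
Proof.
move=> Xsub Xsucc Xdense hr hacc k w hw; apply: clconv_approx => e e0.
have [N [w' [ww' w'S]]] :=
  unit_sphere_approx_family Xsub Xsucc Xdense (fun j => (hw j).2) e0.
have [n Nn rn] := hacc e e0 N.
have [Xw'0 w'0_1] := w'S n Nn ord0.
have : Rset (unit_sphere (X n)) (r n).
  by rewrite hr //; exists (w' ord0); split; rewrite // -normr_gt0 w'0_1.
move=> /(_ k w' (w'S n Nn)) rnR; do 2 eexists; split; [exact: rnR|exact: rn|].
move=> _ [x [_ x1] <-]; eexists; first by exists x.
exact: mean_dist_perturb.
Qed.
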